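(* For any finite set $P\subset\mathbb{R}^1$ containing the source $s$, any integer $k\ge 1$ and any $\alpha>1$, the canonical range assignment satisfies $$\mathrm{cost}_\alpha(\rho_k(P))\le\Big(1+\frac{2^\alpha}{k^{\alpha-1}}\Big)\cdot\mathrm{cost}_\alpha(\rho_{\mathrm{opt}}(P)).$$
   Context: Setting: points in $\mathbb{R}^1$; a range assignment $\rho$ on a finite set $P$ containing source $s$ induces the directed graph with edge $(p,q)$ iff $|pq|\le\rho(p)$; feasible if this graph contains an arborescence rooted at $s$ spanning $P$; $\mathrm{cost}_\alpha(\rho(P))=\sum_{p\in P}\rho(p)^\alpha$. Write $P=L\cup\{s\}\cup R$, $L=\{\ell_1,\dots,\ell_{|L|}\}$ left of $s$ and $R=\{r_1,\dots,r_{|R|}\}$ right of $s$, numbered by increasing distance from $s$; $\ell_{|L|},r_{|R|}$ are extreme. Successor: $r_i\mapsto r_{i+1}$, $\ell_i\mapsto\ell_{i+1}$, $s$ has successors $r_1,\ell_1$, extreme points have none. A chain is a path using only edges from a point to its successor. The standard range $\rho_{\mathrm{st}}(p)$ of a non-extreme $p\ne s$ is its distance to its successor, $0$ for extreme points; $s$ has standard ranges $|s\ell_1|,|sr_1|$. A zero-range point is a non-extreme point with range $0$. In a broadcast tree $\mathcal{B}$ (arborescence rooted at $s$) a point of $R\cup L$ is root-crossing if it has a child on the other side of $s$; $s$ is root-crossing if it has children in both $L$ and $R$. $\rho_{\mathrm{opt}}(P)$: if all of $P\setminus\{s\}$ lies on one side of $s$, every point gets its standard range; otherwise $\rho_{\mathrm{opt}}$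 is a minimum-cost feasible assignment whose graph contains a broadcast tree with a single root-crossing point $p^*$, a chain from $s$ to $p^*$, all points within reach of $p^*$ except those on that chain being children of $p^*$, and chains from the rightmost (resp. leftmost) point within reach of $p^*$ to $r_{|R|}$ (resp. $\ell_{|L|}$). Canonical assignment $\rho_k$: if all points lie on one side of $s$, $\rho_k=\rho_{\mathrm{opt}}$; otherwise, with $Z$ the zero-range points of $\rho_{\mathrm{opt}}(P)$ and $Z_k=Z$ if $|Z|\le k$, else $Z_k$ the $k$ points of $Z$ with largest standard ranges (ties arbitrary), set $\rho_k=\rho_{\mathrm{opt}}$ on $P\setminus Z$, $\rho_k=0$ on $Z_k$, $\rho_k=\rho_{\mathrm{st}}$ on $Z\setminus Z_k$. *)

From mathcomp Require Import all_boot all_order all_algebra.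
From mathcomp Require Import all_classical all_reals exp.
Set Implicit Arguments. Unset Strict Implicit. Unset Printing Implicit Defensive.
Import Order.TTheory GRing.Theory Num.Theory.
Local Open Scope ring_scope.

Section Defs.
Variable R : realType.
Implicit Types (P : seq R) (s p q : R) (rho : R -> R).

Definition minseq (xs : seq R) : R :=
  if xs is x :: xs' then foldr Num.min x xs' else 0.

Definition nonextreme P s p : bool :=
  ((s < p) && has (fun q => p < q) P) || ((p < s) && has (fun q => q < p) P).

(* standard range of p <> s : distance to its successor, 0 if extreme *)
Definition st_range P s p : R :=
  if s < p then minseq [seq q - p | q <- P & p < q]
  else if p < s then minseq [seq p - q | q <- P & q < p]
  else 0.

(* b is a successor of a (s has two successors r_1 and l_1) *)
Definition succ_edge P s a b : Prop :=
  a \in P /\ b \in P /\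
  ((s <= a /\ a < b /\ forall x, x \in P -> ~ (a < x /\ x < b)) \/
   (b < a /\ a <= s /\ forall x, x \in P -> ~ (b < x /\ x < a))).

Definition cost (alpha : R) P rho : R := \sum_(p <- P) (rho p) `^ alpha.

Definition edge rho p q : bool := `|p - q| <= rho p.

(* broadcast tree: arborescence rooted at s spanning P in the graph of rho,
   given by its parent function *)
Definition btree P s rho (par : R -> R) : Prop :=
  forall q, q \in P -> q != s ->
    [/\ par q \in P, edge rho (par q) q & exists n, iter n par q = s].

Definition range_assignment P rho : Prop := forall p, p \in P -> 0 <= rho p.

Definition feasible P s rho : Prop :=
  range_assignment P rho /\ exists par, btree P s rho par.

Definition min_cost_feasible (alpha : R) P s rho : Prop :=
  feasible P s rho /\
  forall rho', feasible P s rho' -> cost alpha P rho <= cost alpha P rho'.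

Definition one_sided P s : bool :=
  all (fun q => q <= s) P || all (fun q => s <= q) P.

Definition is_child P s (par : R -> R) p q : bool :=
  (q \in P) && (q != s) && (par q == p).

Definition root_crossing P s (par : R -> R) p : Prop :=
  p \in P /\
  if p == s then
    (exists q, is_child P s par p q /\ q < s) /\
    (exists q, is_child P s par p q /\ s < q)
  else exists q, is_child P s par p q /\
     ((p < s /\ s < q) \/ (s < p /\ q < s)).

Definition is_rho_opt (alpha : R) P s rho : Prop :=
  if one_sided P s then
    (forall p, p \in P -> p != s -> rho p = st_range P s p) /\
    rho s = minseq [seq `|q - s| | q <- P & q != s]
  else
    min_cost_feasible alpha P s rho /\
    exists par pstar,
      btree P s rho par /\
          root_crossing P s par pstar /\
          (forall p, root_crossing P s par p -> p = pstar) /\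
          (* chain in the tree from s to pstar *)
          (forall q, q \in P -> q != s ->
             (s <= q <= pstar) || (pstar <= q <= s) -> succ_edge P s (par q) q) /\
          (forall q, q \in P -> `|pstar - q| <= rho pstar ->
             ~~ ((s <= q <= pstar) || (pstar <= q <= s)) -> par q = pstar) /\
          (* chain from the rightmost point within reach of pstar to r_|R| *)
          (forall q, q \in P ->
             (forall x, x \in P -> `|pstar - x| <= rho pstar -> x < q) ->
             succ_edge P s (par q) q) /\
          (* chain from the leftmost point within reach of pstar to l_|L| *)
          (forall q, q \in P ->
             (forall x, x \in P -> `|pstar - x| <= rho pstar -> q < x) ->
             succ_edge P s (par q) q).

Definition zero_range P s rho p : bool :=
  [&& p \in P, p != s, nonextreme P s p & rho p == 0].

Definition is_Zk P s rho (k : nat) (Zk : seq R) : Prop :=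
  [/\ uniq Zk, {subset Zk <= zero_range P s rho},
      size Zk = minn k (count (zero_range P s rho) P) &
      forall z z', z \in Zk -> zero_range P s rho z' -> z' \notin Zk ->
        st_range P s z' <= st_range P s z].

Definition rho_k P s rho (Zk : seq R) : R -> R := fun p =>
  if one_sided P s then rho p
  else if p \in Zk then 0
  else if zero_range P s rho p then st_range P s p
  else rho p.

End Defs.

From mathcomp Require Import all_boot all_order all_algebra.
From mathcomp Require Import all_classical all_reals exp.
From mathcomp Require Import lra.
Import Order.TTheory GRing.Theory Num.Theory.
Local Open Scope ring_scope.
Set Implicit Arguments. Unset Strict Implicit.

(* In the two-sided case, let z be a zero-range point of rho_opt and z' its
   successor.  The parent of z' cannot be z (whose range is 0), so z' is not
   entered along a chain and must therefore lie within reach of the unique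
   root-crossing point ps.  Hence the gaps [z, z'] of the zero-range points are
   pairwise disjoint subsegments of [ps - r, ps + r], where r = rho_opt ps, and
   their standard ranges sum to at most 2 r.  As Z_k keeps the k largest of
   them, every other zero-range point has standard range at most 2 r / k, so
   giving those points their standard ranges costs at most
   (2 r / k)^(alpha - 1) * 2 r = 2^alpha r^alpha / k^(alpha - 1), and
   r^alpha <= cost rho_opt. *)

Section SumBounds.
Variable R : realType.

Lemma sum_disjoint_intervals_le (T : eqType) (lo hi : T -> R) (S : seq T) (c d : R) :
  uniq S -> c <= d ->
  (forall z, z \in S -> c <= lo z /\ hi z <= d) ->
  {in S &, forall z y, z != y -> hi z <= lo y \/ hi y <= lo z} ->
  \sum_(z <- S) (hi z - lo z) <= d - c.
Proof.
have [n] := ubnP (size S); elim: n => // n IH in S c d *.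
case: S => [_ _ cd _ _|z S /ltnSE Sn]; first by rewrite big_nil subr_ge0.
rewrite cons_uniq => /andP [zS uS] cd inside disj.
have [czl hzd] := inside z (mem_head _ _).
have IHsub (Q : pred T) c' d' : c' <= d' ->
    (forall y, y \in S -> Q y -> c' <= lo y /\ hi y <= d') ->
    \sum_(y <- S | Q y) (hi y - lo y) <= d' - c'.
  move=> cd' inside'; rewrite -big_filter; apply: IH.
  - by rewrite size_filter (leq_ltn_trans (count_size _ _)).
  - exact: filter_uniq.
  - exact: cd'.
  - by move=> y; rewrite mem_filter => /andP [Qy yS]; apply: inside'.
  - by move=> y y'; rewrite !mem_filter => /andP [_ yS] /andP [_ y'S];
      apply: disj; rewrite inE ?yS ?y'S orbT.
have left_sum : \sum_(y <- S | hi y <= lo z) (hi y - lo y) <= lo z - c.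
  apply: IHsub => // y yS hy; split => //.
  by case: (inside y); rewrite ?inE ?yS ?orbT.
have right_sum : \sum_(y <- S | ~~ (hi y <= lo z)) (hi y - lo y) <= d - hi z.
  apply: IHsub => // y yS hy; split; last by case: (inside y); rewrite ?inE ?yS ?orbT.
  have zy : z != y by apply: contraNneq zS => ->.
  by case: (disj z y) => //; rewrite ?mem_head ?inE ?yS ?orbT // => h; rewrite h in hy.
rewrite big_cons (bigID (fun y => hi y <= lo z)) /=; lra.
Qed.

Lemma ler_sum_predI (I : Type) (r : seq I) (Q Q' : pred I) (F : I -> R) :
  (forall i, Q i -> 0 <= F i) ->
  \sum_(i <- r | Q i && Q' i) F i <= \sum_(i <- r | Q i) F i.
Proof.
move=> F_ge0; rewrite big_mkcond [leRHS]big_mkcond; apply: ler_sum => i _.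
by case: ifP => [/andP [-> //]|_]; case: ifP => // /F_ge0.
Qed.

Lemma sum_powR_le_bounded (I : Type) (r : seq I) (Q : pred I) (x : I -> R) (c k a : R) :
  1 <= a -> 0 < k -> (forall i, Q i -> 0 <= x i <= c / k) ->
  \sum_(i <- r | Q i) x i <= c ->
  \sum_(i <- r | Q i) x i `^ a <= c `^ a / k `^ (a - 1).
Proof.
move=> a1 k0 x_bound sum_le.
have a0 : 0 < a by apply: lt_le_trans a1.
have c0 : 0 <= c by apply: le_trans sum_le; apply: sumr_ge0 => i /x_bound /andP [].
apply: (@le_trans _ _ ((c / k) `^ (a - 1) * \sum_(i <- r | Q i) x i)).
  rewrite mulr_sumr; apply: ler_sum => i /x_bound /andP [x0 xM].
  rewrite -mulr_powRB1 // mulrC ler_wpM2r //.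
  by apply: ge0_ler_powR; rewrite ?nnegrE ?subr_ge0 ?(le_trans x0).
apply: le_trans (ler_wpM2l (powR_ge0 _ _) sum_le) _.
have k_ge0 := ltW k0.
rewrite powRM ?invr_ge0 // -powR_inv1 // -powRAC powR_inv1 ?powR_ge0 //.
by rewrite mulrAC [_ * c]mulrC mulr_powRB1.
Qed.

End SumBounds.

Section StandardRange.
Variable R : realType.

Lemma minseq_mem (xs : seq R) : xs != [::] -> minseq xs \in xs.
Proof.
case: xs => [|x xs] //= _; elim: xs => [|y ys IH] /=; first exact: mem_head.
rewrite minEle; case: ifP => _; first by rewrite !inE eqxx orbT.
by move: IH; rewrite !inE => /orP [->|->]; rewrite ?orbT.
Qed.

Lemma minseq_le (xs : seq R) z : z \in xs -> minseq xs <= z.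
Proof.
case: xs => [|x xs] //=; elim: xs z => [|y ys IH] z /=.
  by rewrite mem_seq1 => /eqP ->.
rewrite ge_min !inE => /or3P [/eqP->|/eqP->|h].
- by rewrite IH ?mem_head ?orbT.
- by rewrite lexx.
- by rewrite IH ?orbT // inE h orbT.
Qed.

Lemma minseq_map_mem (f : R -> R) (xs : seq R) :
  xs != [::] -> exists2 x, x \in xs & minseq (map f xs) = f x.
Proof.
move=> xs0; apply/mapP/minseq_mem.
by apply: contra xs0; rewrite -size_eq0 size_map size_eq0.
Qed.

Variables (P : seq R) (s : R).

Lemma st_range_right z : s < z -> nonextreme P s z ->
  [/\ z + st_range P s z \in P, z < z + st_range P s z &
      forall q, q \in P -> z < q -> z + st_range P s z <= q].
Proof.
rewrite /nonextreme /st_range => sz; rewrite sz (lt_gtF sz) orbF.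
rewrite has_filter => /(minseq_map_mem (fun q => q - z)) [q].
rewrite mem_filter => /andP [zq qP] qmin; rewrite qmin addrC subrK.
split=> // q' q'P zq'; rewrite -(lerD2r (- z)) -qmin minseq_le //.
by apply: map_f; rewrite mem_filter zq' q'P.
Qed.

Lemma st_range_left z : z < s -> nonextreme P s z ->
  [/\ z - st_range P s z \in P, z - st_range P s z < z &
      forall q, q \in P -> q < z -> q <= z - st_range P s z].
Proof.
rewrite /nonextreme /st_range => zs; rewrite zs (lt_gtF zs) /=.
rewrite has_filter => /(minseq_map_mem (fun q => z - q)) [q].
rewrite mem_filter => /andP [qz qP] qmin; rewrite qmin opprB addrC subrK.
split=> // q' q'P q'z; rewrite -lerN2 -(lerD2l z) -qmin minseq_le //.
by apply: map_f; rewrite mem_filter q'z q'P.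
Qed.

Lemma st_range_gt0 z : z != s -> nonextreme P s z -> 0 < st_range P s z.
Proof.
case: (ltgtP z s) => // [zs|sz] _ ne.
- by have [_ + _] := st_range_left zs ne; rewrite gtrBl.
- by have [_ + _] := st_range_right sz ne; rewrite ltrDl.
Qed.

Lemma zero_range_st_range_ge0 rho z : zero_range P s rho z -> 0 <= st_range P s z.
Proof. by case/and4P => _ zs ne _; apply/ltW/st_range_gt0. Qed.

Definition next_point z :=
  if s < z then z + st_range P s z else z - st_range P s z.

Definition gap_lo z := if s < z then z else next_point z.
Definition gap_hi z := if s < z then next_point z else z.

Lemma gap_length z : gap_hi z - gap_lo z = st_range P s z.
Proof. by rewrite /gap_hi /gap_lo /next_point; case: (s < z) => /=; lra. Qed.

Lemma gap_disjoint z y : z \in P -> y \in P -> z != s -> y != s ->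
  nonextreme P s z -> nonextreme P s y -> z != y ->
  gap_hi z <= gap_lo y \/ gap_hi y <= gap_lo z.
Proof.
rewrite /gap_hi /gap_lo /next_point => zP yP + + nez ney zy.
case: (ltgtP z s) => // hz _; case: (ltgtP y s) => // hy _.
- have [_ _ zmax] := st_range_left hz nez; have [_ _ ymax] := st_range_left hy ney.
  by case/lt_total/orP: zy => h; [left; apply: ymax | right; apply: zmax].
- by left; lra.
- by right; lra.
- have [_ _ zmin] := st_range_right hz nez; have [_ _ ymin] := st_range_right hy ney.
  by case/lt_total/orP: zy => h; [left; apply: zmin | right; apply: ymin].
Qed.

Lemma next_point_spec z : z != s -> nonextreme P s z ->
  next_point z \in P /\ ((s < z < next_point z) || (next_point z < z < s)).
Proof.
rewrite /next_point; case: (ltgtP z s) => // [zs|sz] _ ne.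
- by have [? lt _] := st_range_left zs ne; rewrite lt.
- by have [? lt _] := st_range_right sz ne; rewrite lt.
Qed.

Lemma succ_edge_next_point a z : z \in P -> z != s -> nonextreme P s z ->
  succ_edge P s a (next_point z) -> a = z.
Proof.
rewrite /next_point => zP + ne [aP [_]]; case: (ltgtP z s) => // [zs|sz] _.
- have [_ zz' z'max] := st_range_left zs ne.
  case=> [[sa [az' _]] | [z'a [as' nb]]]; first lra.
  case: (ltgtP a z) => // h; last by case: (nb z zP).
  by have := z'max a aP h; lra.
- have [_ zz' z'min] := st_range_right sz ne.
  case=> [[sa [az' nb]] | [z'a [as' _]]]; last lra.
  case: (ltgtP a z) => // h; first by case: (nb z zP).
  by have := z'min a aP h; lra.
Qed.

End StandardRange.

Section OptimalTree.
Variables (R : realType) (P : seq R) (s : R) (rho par : R -> R) (ps : R).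
Hypothesis tree : btree P s rho par.
Hypothesis chain_to_ps : forall q, q \in P -> q != s ->
  (s <= q <= ps) || (ps <= q <= s) -> succ_edge P s (par q) q.
Hypothesis chain_right : forall q, q \in P ->
  (forall x, x \in P -> `|ps - x| <= rho ps -> x < q) -> succ_edge P s (par q) q.
Hypothesis chain_left : forall q, q \in P ->
  (forall x, x \in P -> `|ps - x| <= rho ps -> q < x) -> succ_edge P s (par q) q.
Hypothesis ps_mem : ps \in P.
Hypothesis rho_ps_ge0 : 0 <= rho ps.

Lemma next_point_not_chain z : zero_range P s rho z ->
  ~ succ_edge P s (par (next_point P s z)) (next_point P s z).
Proof.
case/and4P=> zP zs ne /eqP rz0 /(succ_edge_next_point zP zs ne) paz.
have [nP side] := next_point_spec zs ne.
have ns : next_point P s z != s.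
  by apply/eqP => E; move: side; rewrite E => /orP [] /andP [? ?]; lra.
case: (tree nP ns) => _; rewrite /edge paz rz0 normr_le0 subr_eq0 => /eqP E _.
by move: side; rewrite -E => /orP [] /andP [? ?]; lra.
Qed.

Lemma not_chain_within_reach q : q \in P -> ~ succ_edge P s (par q) q ->
  ps - rho ps <= q <= ps + rho ps.
Proof.
move=> qP nq.
have [x xP /andP [xr qx]] : exists2 x, x \in P & (`|ps - x| <= rho ps) && (q <= x).
  apply/hasP/negPn/negP => /hasPn above; apply: nq; apply: chain_right => // x xP xr.
  by have := above x xP; rewrite xr -ltNge.
have [y yP /andP [yr yq]] : exists2 y, y \in P & (`|ps - y| <= rho ps) && (y <= q).
  apply/hasP/negPn/negP => /hasPn below; apply: nq; apply: chain_left => // y yP yr.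
  by have := below y yP; rewrite yr -ltNge.
move: xr yr; rewrite !ler_norml => /andP [? ?] /andP [? ?]; apply/andP; split; lra.
Qed.

Lemma gap_within_reach z : zero_range P s rho z ->
  ps - rho ps <= gap_lo P s z /\ gap_hi P s z <= ps + rho ps.
Proof.
move=> Zz; have /and4P [zP zs ne _] := Zz.
have [nP side] := next_point_spec zs ne.
have nochain := next_point_not_chain Zz.
have /andP [reach_lo reach_hi] := not_chain_within_reach nP nochain.
have off_path : ~~ ((s <= next_point P s z <= ps) || (ps <= next_point P s z <= s)).
  apply/negP => onpath; apply: nochain; apply: chain_to_ps => //.
  by apply/eqP => E; move: side; rewrite E => /orP [] /andP [? ?]; lra.
move: zs reach_lo reach_hi off_path; rewrite /gap_lo /gap_hi /next_point.
case: (ltgtP z s) => // [zs|sz] _ lo hi off.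
- have [_ nz zmax] := st_range_left zs ne.
  have nps : z - st_range P s z < ps.
    by rewrite ltNge; apply: contra off => h; rewrite h; apply/orP; right; lra.
  have zps : z <= ps by rewrite leNgt; apply/negP => /(zmax _ ps_mem); lra.
  split; lra.
- have [_ zn zmin] := st_range_right sz ne.
  have psn : ps < z + st_range P s z.
    by rewrite ltNge; apply: contra off => h; rewrite h; apply/orP; left; lra.
  have psz : ps <= z by rewrite leNgt; apply/negP => /(zmin _ ps_mem); lra.
  split; lra.
Qed.

Lemma sum_st_range_zero_range_le : uniq P ->
  \sum_(z <- P | zero_range P s rho z) st_range P s z <= 2 * rho ps.
Proof.
move=> uP; rewrite -big_filter; under eq_bigr do rewrite -gap_length.
apply: le_trans (@sum_disjoint_intervals_le _ _ (gap_lo P s) (gap_hi P s) _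
  (ps - rho ps) (ps + rho ps) (filter_uniq _ uP) _ _ _) _.
- by have := rho_ps_ge0; lra.
- by move=> z; rewrite mem_filter => /andP [/gap_within_reach].
- move=> z y; rewrite !mem_filter => /andP [Zz _] /andP [Zy _].
  move: Zz Zy => /and4P [zP zs nez _] /and4P [yP ys ney _].
  exact: gap_disjoint.
- lra.
Qed.

End OptimalTree.

Section CanonicalAssignment.
Variables (R : realType) (P : seq R) (s : R) (rho : R -> R) (k : nat) (Zk : seq R).
Hypothesis Zk_spec : is_Zk P s rho k Zk.

Lemma is_Zk_sub p : p \in Zk -> zero_range P s rho p.
Proof. by case: Zk_spec => _ sub _ _ /sub; rewrite unfold_in. Qed.

Lemma size_Zk_outside p : zero_range P s rho p -> p \notin Zk -> size Zk = k.
Proof.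
move=> Zp pZk; have [uZk _ size_eq _] := Zk_spec.
rewrite size_eq; apply/minn_idPl; rewrite leqNgt; apply: contra pZk => /ltnW count_le.
have sub : {subset Zk <= [seq x <- P | zero_range P s rho x]}.
  by move=> z /is_Zk_sub Zz; rewrite mem_filter Zz; case/and4P: Zz.
have [|_ ->] := uniq_min_size uZk sub.
  by rewrite size_filter size_eq (minn_idPr count_le).
by rewrite mem_filter Zp; case/and4P: Zp.
Qed.

Lemma st_range_outside_Zk_le p : uniq P -> zero_range P s rho p -> p \notin Zk ->
  k%:R * st_range P s p <= \sum_(z <- P | zero_range P s rho z) st_range P s z.
Proof.
move=> uP Zp pZk; have [uZk _ _ largest] := Zk_spec.
have -> : k%:R * st_range P s p = \sum_(z <- Zk) st_range P s p.
  by rewrite big_const_seq iter_addr_0 count_predT (size_Zk_outside Zp pZk) mulr_natl.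
apply: le_trans (_ : \sum_(z <- Zk) st_range P s z <= _).
  by rewrite big_seq [leRHS]big_seq; apply: ler_sum => z /largest; apply.
have Zk_perm : perm_eq [seq z <- P | z \in Zk] Zk.
  apply: uniq_perm (filter_uniq _ uP) uZk _ => z.
  by rewrite mem_filter andb_idr // => /is_Zk_sub /and4P [].
rewrite -(perm_big _ Zk_perm) big_filter.
under eq_bigl => z do rewrite -(andb_idl (@is_Zk_sub z)).
exact/ler_sum_predI/zero_range_st_range_ge0.
Qed.

Lemma cost_rho_k (alpha : R) : ~~ one_sided P s -> alpha != 0 ->
  cost alpha P (rho_k P s rho Zk) = cost alpha P rho +
    \sum_(p <- P | zero_range P s rho p && (p \notin Zk)) st_range P s p `^ alpha.
Proof.
move=> two_sided a0; rewrite /cost [X in _ = _ + X]big_mkcond -big_split.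
apply: eq_bigr => p _.
rewrite /rho_k (negbTE two_sided) /=; case: ifP => [/is_Zk_sub Zp|_].
  by move: (Zp) => /and4P [_ _ _ /eqP ->]; rewrite Zp addr0.
case: ifP => Zp /=; last by rewrite addr0.
by move: Zp => /and4P [_ _ _ /eqP ->]; rewrite powR0 // add0r.
Qed.

End CanonicalAssignment.

Lemma cost_ge0 (R : realType) alpha (P : seq R) rho : 0 <= cost alpha P rho.
Proof. by rewrite sumr_ge0 // => p _; apply: powR_ge0. Qed.

Lemma powR_le_cost (R : realType) alpha (P : seq R) rho p : uniq P -> p \in P ->
  rho p `^ alpha <= cost alpha P rho.
Proof.
by move=> uP pP; rewrite /cost (bigD1_seq p pP uP) lerDl sumr_ge0 // => q _; apply: powR_ge0.
Qed.

Theorem lemma2 (R : realType) (P : seq R) (s : R) (k : nat) (alpha : R)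
    (rho_opt : R -> R) (Zk : seq R) :
  uniq P -> s \in P -> (1 <= k)%N -> 1 < alpha ->
  is_rho_opt alpha P s rho_opt ->
  is_Zk P s rho_opt k Zk ->
  cost alpha P (rho_k P s rho_opt Zk)
    <= (1 + 2 `^ alpha / (k%:R) `^ (alpha - 1)) * cost alpha P rho_opt.
Proof.
move=> uP _ k1 a1 opt Zk_spec.
have K_ge0 : 0 <= 2 `^ alpha / k%:R `^ (alpha - 1) by rewrite divr_ge0 ?powR_ge0.
rewrite mulrDl mul1r; case: (boolP (one_sided P s)) => sides.
  by rewrite /rho_k sides lerDl mulr_ge0 ?cost_ge0.
move: opt; rewrite /is_rho_opt (negbTE sides).
case=> [[[rho_ge0 _] _] [par [ps [tree [[psP _] [_ [chain [_ [chainR chainL]]]]]]]]].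
have r_ge0 := rho_ge0 ps psP.
have sum_le := sum_st_range_zero_range_le tree chain chainR chainL psP r_ge0 uP.
have st_ge0 := @zero_range_st_range_ge0 _ P s rho_opt.
have k_gt0 : 0 < k%:R :> R by rewrite ltr0n.
have a_neq0 : alpha != 0 by rewrite gt_eqF // (lt_trans ltr01).
rewrite (cost_rho_k Zk_spec sides a_neq0) lerD2l.
apply: le_trans (_ : _ <= (2 * rho_opt ps) `^ alpha / k%:R `^ (alpha - 1)) _.
  apply: (sum_powR_le_bounded (ltW a1) k_gt0).
    move=> p /andP [Zp pZk]; rewrite st_ge0 //= (ler_pdivlMr _ _ k_gt0) mulrC.
    exact: le_trans (st_range_outside_Zk_le Zk_spec uP Zp pZk) sum_le.
  exact: le_trans (ler_sum_predI _ _ st_ge0) sum_le.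
rewrite powRM ?ler0n // mulrAC ler_wpM2l //; exact: powR_le_cost.
Qed.
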